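(* Let $m\in\mathbb{N}$, let $H$ be a finite field and let $\mathbb{F}$ be an extension field of $H$ of degree $[\mathbb{F}:H]=m$. Let $h_1,\dots,h_m\in H^m$ and $t_1,\dots,t_m\in\mathbb{F}$ be chosen independently and uniformly at random. Then for every set $A\subseteq\mathbb{F}^m$ with $|A|=\alpha\,|\mathbb{F}|^m$, \[ \Pr\Big[\sum_{i=1}^m t_i\, h_i\in A\Big]\le \alpha+\frac{2}{|H|}. \]
   Context: Here $H^m\subseteq\mathbb{F}^m$ via the inclusion $H\subseteq\mathbb{F}$, and $t_i h_i$ denotes scalar multiplication of the vector $h_i$ by $t_i\in\mathbb{F}$. *)

From HB Require Import structures.
From mathcomp Require Import all_boot all_order all_algebra all_field.
Set Implicit Arguments. Unset Strict Implicit. Unset Printing Implicit Defensive.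
Import GRing.Theory Num.Theory.
Local Open Scope ring_scope.

Definition embed_vec (H : finFieldType) (F : fieldExtType H) (m : nat)
  (v : 'rV[H]_m) : 'rV[F]_m := map_mx (fun c : H => c%:A) v.

Definition rand_comb (H : finFieldType) (F : fieldExtType H) (m : nat)
  (h : {ffun 'I_m -> 'rV[H]_m}) (t : {ffun 'I_m -> finvect_type F})
  : 'rV[finvect_type F]_m :=
  \sum_(i < m) (t i : F) *: embed_vec F (h i).

From HB Require Import structures.
From mathcomp Require Import all_boot all_order all_algebra all_field.
From mathcomp Require Import ring lra.
Import Order.TTheory GRing.Theory Num.Theory.
Local Open Scope ring_scope.

(* Write q = |H| and stack h_1, ..., h_m as the rows of an m x m matrix M(h)
   over H.  Then sum_i t_i h_i is the row vector t *m M(h), read in F.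
   - When M(h) is invertible, t |-> t *m M(h) is injective on F^m, so at
     most |A| of the |F|^m choices of t land in A.
   - By the count of GL_m(H), a uniformly random M(h) is invertible with
     probability prod_(1 <= i <= m) (1 - q^-i) >= 1 - sum_i q^-i >= 1 - 2/q,
     so at most (2/q) q^(m*m) choices of h give a singular matrix; for those
     we bound the number of good t by |F|^m.
   Summing over h, #{(h, t) | sum_i t_i h_i \in A} <= q^(m*m) |A| +
   (2/q) q^(m*m) |F|^m, which is the claim after dividing by q^(m*m) |F|^m. *)

Lemma weierstrass_prod {R : realDomainType} {I : Type} (r : seq I)
    (P : pred I) (a : I -> R) :
  (forall i, P i -> 0 <= a i <= 1) ->
  1 - \sum_(i <- r | P i) a i <= \prod_(i <- r | P i) (1 - a i).
Proof.
move=> a01; elim: r => [|i r IH]; first by rewrite !big_nil subr0.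
rewrite !big_cons; case: ifP => // Pi.
have /andP [ai0 ai1] := a01 i Pi.
have S0 : 0 <= \sum_(j <- r | P j) a j.
  by apply: sumr_ge0 => j /a01 /andP [].
have P0 : 0 <= \prod_(j <- r | P j) (1 - a j).
  by apply: prodr_ge0 => j /a01 /andP [_]; rewrite subr_ge0.
nra.
Qed.

Lemma geometric_tail_le (R : realDomainType) (x : R) (n : nat) :
  0 <= x -> 2 * x <= 1 -> \sum_(1 <= i < n.+1) x ^+ i <= 2 * x.
Proof.
move=> x0 x2.
suff : \sum_(1 <= i < n.+1) x ^+ i <= 2 * x - 2 * x ^+ n.+1.
  by have := exprn_ge0 n.+1 x0; lra.
elim: n => [|n IH]; first by rewrite big_geq // expr1 subrr.
rewrite big_nat_recr //= [x ^+ n.+2]exprS.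
have := exprn_ge0 n.+1 x0; nra.
Qed.

(* The order q^C(n,2) prod_(1 <= i <= n) (q^i - 1) of GL_n(F_q), written as a
   fraction of the number q^(n*n) of all n x n matrices. *)
Lemma GL_order_density (R : numFieldType) (q n : nat) : (0 < q)%N ->
  ((q ^ 'C(n, 2) * \prod_(1 <= i < n.+1) (q ^ i - 1))%N%:R : R)
  = q%:R ^+ (n * n) * \prod_(1 <= i < n.+1) (1 - q%:R^-1 ^+ i).
Proof.
move=> q0; have qn0 : (q%:R : R) != 0 by rewrite pnatr_eq0 -lt0n.
elim: n => [|n IH]; first by rewrite !big_geq // bin0n expn0 muln1 expr0 mulr1.
rewrite [\prod_(_ <= _ < n.+2) (_ - _)%N]big_nat_recr //=.
rewrite [\prod_(_ <= _ < n.+2) (_ - _)]big_nat_recr //= binS bin1 expnD.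
rewrite !natrM mulrACA -natrM IH.
rewrite natrB ?expn_gt0 ?q0 // !natrX exprVn.
have -> : (n.+1 * n.+1 = n * n + n + n.+1)%N by ring.
by rewrite !exprD; field; rewrite expf_neq0.
Qed.

Lemma card_singular_mx_le (K : finFieldType) (n : nat) :
  (#|[set M : 'M[K]_n | M \notin unitmx]|%:R : rat)
    <= 2 * (#|K| ^ (n * n))%:R / #|K|%:R.
Proof.
have q_ge2 : (2 <= #|K|)%N := card_finNzRing_gt1 K.
have q_gt0 : (0 : rat) < #|K|%:R by rewrite ltr0n ltnW.
case: n => [|n].
  rewrite (_ : [set M : 'M[K]_0 | M \notin unitmx] = set0) ?cards0.
    by rewrite divr_ge0 // ltW.
  by apply/setP => M; rewrite !inE unitmxE det_mx00 unitr1.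
have card_units : #|[set M : 'M[K]_n.+1 | M \in unitmx]| =
    (#|K| ^ 'C(n.+1, 2) * \prod_(1 <= i < n.+2) (#|K| ^ i - 1))%N.
  by rewrite -card_GL // cardsT card_sub; apply: eq_card => M; rewrite !inE.
have card_singular : #|[set M : 'M[K]_n.+1 | M \notin unitmx]| =
    (#|K| ^ (n.+1 * n.+1) - #|[set M : 'M[K]_n.+1 | M \in unitmx]|)%N.
  rewrite -card_mx -(cardsC [set M : 'M[K]_n.+1 | M \in unitmx]) addKn.
  by apply: eq_card => M; rewrite !inE.
rewrite card_singular natrB; last by rewrite -card_mx; apply: max_card.
rewrite card_units (GL_order_density _ _ _ (ltnW q_ge2)).
set x := (#|K|%:R : rat)^-1.
have x0 : 0 <= x by rewrite invr_ge0 ltW.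
have x2 : 2 * x <= 1.
  by rewrite -(@ler_pM2r _ #|K|%:R) // mul1r -mulrA mulVf ?gt_eqF // mulr1 ler_nat.
have prod_ge : 1 - 2 * x <= \prod_(1 <= i < n.+2) (1 - x ^+ i).
  apply: le_trans (weierstrass_prod _ _ _ _) => [|i _].
    by rewrite lerD2l lerN2 geometric_tail_le.
  by rewrite exprn_ge0 ?exprn_ile1 // (le_trans _ x2) // ler_peMl // ler1n.
rewrite natrX; set N := _ ^+ _.
rewrite (mulrAC 2) [2 * x * N]mulrC -{1}[N]mulr1 -mulrBr ler_wpM2l //.
  by rewrite exprn_ge0 // ltW.
lra.
Qed.

Lemma card_pairs {T1 T2 : finType} (P : T1 -> T2 -> bool) :
  #|[set w : T1 * T2 | P w.1 w.2]| = (\sum_(x : T1) #|[set y | P x y]|)%N.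
Proof.
rewrite -sum1_card (eq_bigl (fun w => xpredT w.1 && P w.1 w.2)); last first.
  by move=> w; rewrite inE.
rewrite -(pair_big_dep xpredT P (fun _ _ => 1%N)); apply: eq_bigr => x _.
by rewrite -sum1_card; apply: eq_bigl => y; rewrite inE.
Qed.

Section RandomCombination.
Variables (H : finFieldType) (F : fieldExtType H) (m : nat).

Definition rows_mx (h : {ffun 'I_m -> 'rV[H]_m}) : 'M[H]_m :=
  \matrix_(i, j) h i 0 j.

Lemma rows_mx_bij : bijective rows_mx.
Proof.
exists (fun M : 'M[H]_m => [ffun i => row i M]) => [h | M].
  by apply/ffunP => i; apply/rowP => j; rewrite ffunE !mxE.
by apply/matrixP => i j; rewrite !mxE ffunE mxE.
Qed.

Lemma rand_combE h (t : {ffun 'I_m -> finvect_type F}) :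
  rand_comb h t = (\row_i (t i : F)) *m map_mx (in_alg F) (rows_mx h).
Proof.
rewrite mulmx_sum_row /rand_comb; apply: eq_bigr => i _; rewrite mxE.
by congr (_ *: _); apply/rowP => j; rewrite !mxE.
Qed.

Lemma rand_comb_inj h : rows_mx h \in unitmx -> injective (@rand_comb H F m h).
Proof.
move=> h_unit t t'; rewrite !rand_combE => eq_tt'.
have hF_unit : map_mx (in_alg F) (rows_mx h) \in unitmx by rewrite map_unitmx.
move/(congr1 (mulmx^~ (invmx (map_mx (in_alg F) (rows_mx h))))): eq_tt'.
rewrite !mulmxK // => /rowP eq_row.
by apply/ffunP => i; have := eq_row i; rewrite !mxE.
Qed.

Lemma card_hits_le (A : {set 'rV[finvect_type F]_m}) h :
  (#|[set t | rand_comb h t \in A]| <=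
   if rows_mx h \in unitmx then #|A| else #|{ffun 'I_m -> finvect_type F}|)%N.
Proof.
case: ifP => [h_unit|_]; last exact: max_card.
rewrite -(card_imset _ (@rand_comb_inj h h_unit)).
apply: subset_leq_card; apply/subsetP => _ /imsetP [t t_hit ->].
by rewrite inE in t_hit.
Qed.

Lemma card_hits_total_le (A : {set 'rV[finvect_type F]_m}) :
  (#|[set w : {ffun 'I_m -> 'rV[H]_m} * {ffun 'I_m -> finvect_type F}
        | rand_comb w.1 w.2 \in A]|
   <= #|{ffun 'I_m -> 'rV[H]_m}| * #|A|
      + #|[set M : 'M[H]_m | M \notin unitmx]|
        * #|{ffun 'I_m -> finvect_type F}|)%N.
Proof.
have card_singular_rows : #|[set h | rows_mx h \notin unitmx]| =
                          #|[set M : 'M[H]_m | M \notin unitmx]|.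
  rewrite -(on_card_preimset (onW_bij _ rows_mx_bij)).
  by apply: eq_card => h; rewrite !inE.
rewrite (card_pairs (fun h t => rand_comb h t \in A)).
apply: leq_trans; first by apply: leq_sum => h _; apply: card_hits_le.
rewrite (bigID (fun h => rows_mx h \in unitmx)) /= -card_singular_rows.
rewrite (eq_bigr (fun _ => #|A|)) => [|h ->] //.
rewrite [X in (_ + X)%N](eq_bigr (fun _ => #|{ffun 'I_m -> finvect_type F}|)).
  rewrite !sum_nat_const leq_add ?leq_mul ?max_card //.
  by apply/eq_leq/eq_card => h; rewrite inE.
by move=> h /negbTE ->.
Qed.

End RandomCombination.

Theorem mainTheorem3 (m : nat) (H : finFieldType) (F : fieldExtType H)
  (hdeg : \dim {:F} = m) (A : {set 'rV[finvect_type F]_m}) :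
  let alpha : rat := #|A|%:R / (#|finvect_type F| ^ m)%:R in
  (#|[set w : ({ffun 'I_m -> 'rV[H]_m} * {ffun 'I_m -> finvect_type F})%type
        | rand_comb w.1 w.2 \in A]|%:R
     / #|[set: ({ffun 'I_m -> 'rV[H]_m} * {ffun 'I_m -> finvect_type F})%type]|%:R
     : rat)
    <= alpha + 2 / #|H|%:R.
Proof.
cbv zeta; rewrite cardsT card_prod natrM.
have hits := card_hits_total_le H F m A.
have singular := card_singular_mx_le H m.
have card_h : #|{ffun 'I_m -> 'rV[H]_m}| = (#|H| ^ (m * m))%N.
  by rewrite card_ffun card_mx card_ord mul1n -expnM.
have card_t : #|{ffun 'I_m -> finvect_type F}| = (#|finvect_type F| ^ m)%N.
  by rewrite card_ffun card_ord.
rewrite card_h card_t in hits *.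
have H_gt0 : (0 < #|H|)%N := ltnW (card_finNzRing_gt1 H).
have F_gt0 : (0 < #|finvect_type F|)%N by apply/card_gt0P; exists 0.
have Nt_gt0 : (0 : rat) < (#|finvect_type F| ^ m)%:R.
  by rewrite ltr0n expn_gt0 F_gt0.
have Nh_gt0 : (0 : rat) < (#|H| ^ (m * m))%:R.
  by rewrite ltr0n expn_gt0 H_gt0.
rewrite ler_pdivrMr ?mulr_gt0 //.
move: hits; rewrite -(ler_nat rat) natrD !natrM => /le_trans; apply.
rewrite mulrDl lerD //; first by rewrite mulrCA divfK ?gt_eqF.
by rewrite mulrA ler_wpM2r ?(ltW Nt_gt0) // mulrAC.
Qed.
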